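(* Let $0\le\lambda<n$ and $1\le p<\infty$. Each of the subsets $V_0L^{p,\lambda}$, $V_\infty L^{p,\lambda}$ and $V^{(\ast)}L^{p,\lambda}$ is closed in $L^{p,\lambda}(\mathbb{R}^n)$; consequently $V^{(\ast)}_{0,\infty}L^{p,\lambda}$ is closed in $L^{p,\lambda}(\mathbb{R}^n)$.
   Context: $B(x,r)$ is the open ball in $\mathbb{R}^n$ with center $x$ and radius $r$. For $f\in L^1_{\mathrm{loc}}(\mathbb{R}^n)$ let $\mathfrak{M}_{p,\lambda}(f;x,r):=r^{-\lambda}\int_{B(x,r)}|f(y)|^p\,dy$. The homogeneous Morrey space $L^{p,\lambda}(\mathbb{R}^n)$ is the Banach space of $f\in L^p_{\mathrm{loc}}(\mathbb{R}^n)$ with $\|f\|_{p,\lambda}:=\sup_{x\in\mathbb{R}^n,\,r>0}\mathfrak{M}_{p,\lambda}(f;x,r)^{1/p}<\infty$. Define the subsets of $L^{p,\lambda}(\mathbb{R}^n)$: $V_0L^{p,\lambda}=\{f:\lim_{r\to0}\sup_{x}\mathfrak{M}_{p,\lambda}(f;x,r)=0\}$; $V_\infty L^{p,\lambda}=\{f:\lim_{r\to\infty}\sup_{x}\mathfrak{M}_{p,\lambda}(f;x,r)=0\}$; $V^{(\ast)}L^{p,\lambda}=\{f:\lim_{N\to\infty}\mathcal{A}_{N,p}(f)=0\}$, where $\mathcal{A}_{N,p}(f):=\sup_{x\in\mathbb{R}^n}\int_{B(x,1)}|f(y)|^p\chi_{\mathbb{R}^n\setminus B(0,N)}(y)\,dy$,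 $N\in\mathbb{N}$. Finally $V^{(\ast)}_{0,\infty}L^{p,\lambda}:=V_0L^{p,\lambda}\cap V_\infty L^{p,\lambda}\cap V^{(\ast)}L^{p,\lambda}$. *)

From HB Require Import structures.
From mathcomp Require Import all_boot all_order all_algebra.
From mathcomp Require Import all_classical all_reals all_analysis.
Set Implicit Arguments. Unset Strict Implicit. Unset Printing Implicit Defensive.
Import Order.TTheory GRing.Theory Num.Theory.
Import numFieldNormedType.Exports.
Local Open Scope classical_set_scope.
Local Open Scope ring_scope.
Local Notation lt := (fun a b : \bar _ => (a < b)%E).

Section Morrey.
Variable R : realType.

(* Lebesgue integral over R^n of a nonnegative extended-real function,
   computed as the iterated integral w.r.t. the 1-dimensional Lebesgue
   measure (equal to the integral for the n-dimensional Lebesgue measure by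
   Tonelli's theorem for nonnegative measurable integrands). *)
Fixpoint iint (n : nat) : (n.-tuple R -> \bar R) -> \bar R :=
  match n return (n.-tuple R -> \bar R) -> \bar R with
  | 0 => fun g => g [tuple]
  | m.+1 => fun g =>
      (\int[@lebesgue_measure R]_(x in setT) iint (fun t : m.-tuple R => g (cons_tuple x t)))%E
  end.

Definition iint_on (n : nat) (A : set (n.-tuple R)) (g : n.-tuple R -> \bar R) : \bar R :=
  iint (fun y => ((\1_A y)%:E * g y)%E).

Definition eball (n : nat) (x : n.-tuple R) (r : R) : set (n.-tuple R) :=
  [set y | \sum_(i < n) (tnth y i - tnth x i) ^+ 2 < r ^+ 2].

Definition morreyM (n : nat) (p lam : R) (f : n.-tuple R -> R) (x : n.-tuple R) (r : R)
  : \bar R :=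
  ((r `^ (- lam))%:E * iint_on (eball x r) (fun y => (`|f y| `^ p)%:E))%E.

Definition morrey_norm (n : nat) (p lam : R) (f : n.-tuple R -> R) : \bar R :=
  ereal_sup [set (morreyM p lam f x r `^ (p^-1))%E | x in [set: n.-tuple R] & r in [set r | 0 < r]].

Definition morrey (n : nat) (p lam : R) (f : n.-tuple R -> R) : Prop :=
  measurable_fun setT f /\ (morrey_norm p lam f < +oo)%E.

Definition supM (n : nat) (p lam : R) (f : n.-tuple R -> R) (r : R) : \bar R :=
  ereal_sup [set morreyM p lam f x r | x in [set: n.-tuple R]].

Definition V0 (n : nat) (p lam : R) : set (n.-tuple R -> R) :=
  [set f | morrey p lam f /\ supM p lam f r @[r --> 0^'+] --> 0%E].

Definition Vinfty (n : nat) (p lam : R) : set (n.-tuple R -> R) :=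
  [set f | morrey p lam f /\ supM p lam f r @[r --> +oo] --> 0%E].

Definition AN (n : nat) (p : R) (f : n.-tuple R -> R) (N : nat) : \bar R :=
  ereal_sup [set iint_on (eball x 1)
                (fun y => (`|f y| `^ p * \1_(~` eball [tuple of nseq n 0] N%:R) y)%:E)
            | x in [set: n.-tuple R]].

Definition Vstar (n : nat) (p lam : R) : set (n.-tuple R -> R) :=
  [set f | morrey p lam f /\ AN p f N @[N --> \oo] --> 0%E].

Definition V0inftystar (n : nat) (p lam : R) : set (n.-tuple R -> R) :=
  V0 p lam `&` Vinfty p lam `&` Vstar p lam.

Definition morrey_closed (n : nat) (p lam : R) (V : set (n.-tuple R -> R)) : Prop :=
  forall f : n.-tuple R -> R, morrey p lam f ->
    (forall e : R, 0 < e -> exists2 g, V g & lt (morrey_norm p lam (f \- g)) e%:E) ->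
    V f.

End Morrey.

(* Each of the three sets consists of the f in L^{p,lambda} for which a supremum
   sup_x Q_f(i, x) of local integrals of |f|^p vanishes along some filter of
   indices i.  Every such local integral is a weighted integral of |f|^p with a
   weight bounded by the indicator of a ball, so the pointwise inequality
   |f|^p <= 2^p (|f - g|^p + |g|^p) gives Q_f <= 2^p (||f - g||^p + Q_g),
   uniformly in x and i.  Choosing g in the set with ||f - g|| small then
   forces sup_x Q_f to vanish as well. *)
From HB Require Import structures.
From mathcomp Require Import all_boot all_order all_algebra.
From mathcomp Require Import all_classical all_reals all_analysis.
From mathcomp Require Import measurable_realfun ring.
Set Implicit Arguments. Unset Strict Implicit. Unset Printing Implicit Defensive.
Import Order.TTheory GRing.Theory Num.Theory.
Import numFieldNormedType.Exports.
Local Open Scope classical_set_scope.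
Local Open Scope ring_scope.

Lemma powR_norm_le_split (R : realType) (p a b : R) : 0 <= p ->
  `|a| `^ p <= 2 `^ p * (`|a - b| `^ p + `|b| `^ p).
Proof.
move=> p_ge0; set m := Num.max `|a - b| `|b|.
have m_ge0 : 0 <= m by rewrite le_max normr_ge0.
have a_le : `|a| <= 2 * m.
  rewrite -[a](subrK b) mulr2n mulrDl mul1r.
  by apply: le_trans (ler_normD _ _) _; rewrite lerD // le_max lexx ?orbT.
apply: le_trans (ge0_ler_powR p_ge0 _ _ a_le) _; rewrite ?nnegrE ?mulr_ge0 //.
rewrite powRM // ler_wpM2l ?powR_ge0 // /m.
by case: (leP `|a - b| `|b|) => _; rewrite ?lerDr ?lerDl powR_ge0.
Qed.

Section iterated_integral.
Variable R : realType.
Local Open Scope ereal_scope.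

Lemma iint_ge0 n (h : n.-tuple R -> \bar R) : (forall y, 0 <= h y) -> 0 <= iint h.
Proof.
elim: n h => [|n IH] h h_ge0 /=; first exact: h_ge0.
by apply: integral_ge0 => x _; exact: IH.
Qed.

Lemma measurable_cons_section n (x : R) (h : n.+1.-tuple R -> \bar R) :
  measurable_fun setT h -> measurable_fun [set: n.-tuple R] (fun t => h (cons_tuple x t)).
Proof.
move=> mh; apply: (measurableT_comp mh).
exact: (measurable_cons (measurable_cst x) (@measurable_id _ _ setT)).
Qed.

Lemma measurable_iint_param n d (X : measurableType d) (h : X * n.-tuple R -> \bar R) :
  measurable_fun setT h -> (forall z, 0 <= h z) ->
  measurable_fun setT (fun x => iint (fun t => h (x, t))).
Proof.
elim: n d X h => [|n IH] d X h mh h_ge0 /=.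
  by apply: measurableT_comp => //; apply: measurable_fun_pair => //; exact: measurable_cst.
pose k (z : (X * R) * n.-tuple R) := h (z.1.1, cons_tuple z.1.2 z.2).
have mk : measurable_fun setT k.
  apply: measurableT_comp => //; apply: measurable_fun_pair; first exact: measurableT_comp.
  by apply: measurable_cons; [exact: measurableT_comp | exact: measurable_snd].
have mF := IH _ _ k mk (fun z => h_ge0 _).
by have := @measurable_fun_fubini_tonelli_F _ _ X (measurableTypeR R) R (@lebesgue_measure R)
  _ mF (fun z => iint_ge0 (fun _ => h_ge0 _)).
Qed.

Lemma measurable_iint_cons n (h : n.+1.-tuple R -> \bar R) :
  measurable_fun setT h -> (forall y, 0 <= h y) ->
  measurable_fun [set: R] (fun x => iint (fun t => h (cons_tuple x t))).
Proof.
move=> mh h_ge0; apply: (measurable_iint_param (h := fun z => h (cons_tuple z.1 z.2))) => //.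
by apply: measurableT_comp => //; exact: (measurable_cons measurable_fst measurable_snd).
Qed.

Lemma ge0_le_iint n (h1 h2 : n.-tuple R -> \bar R) :
  measurable_fun setT h1 -> measurable_fun setT h2 ->
  (forall y, 0 <= h1 y) -> (forall y, h1 y <= h2 y) -> iint h1 <= iint h2.
Proof.
elim: n h1 h2 => [|n IH] h1 h2 m1 m2 h1_ge0 h12 /=; first exact: h12.
have h2_ge0 y : 0 <= h2 y by apply: le_trans (h12 y).
apply: ge0_le_integral => //; [by move=> x _; apply: iint_ge0|exact: measurable_iint_cons|..].
- exact: measurable_iint_cons.
- by move=> x _; apply: IH => //; exact: measurable_cons_section.
Qed.

Lemma ge0_iintD n (h1 h2 : n.-tuple R -> \bar R) :
  measurable_fun setT h1 -> measurable_fun setT h2 ->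
  (forall y, 0 <= h1 y) -> (forall y, 0 <= h2 y) ->
  iint (fun y => h1 y + h2 y) = iint h1 + iint h2.
Proof.
elim: n h1 h2 => [|n IH] h1 h2 m1 m2 h1_ge0 h2_ge0 //=.
rewrite -ge0_integralD //; last 4 first.
- by move=> x _; apply: iint_ge0.
- exact: measurable_iint_cons.
- by move=> x _; apply: iint_ge0.
- exact: measurable_iint_cons.
by apply: eq_integral => x _; apply: IH => //; exact: measurable_cons_section.
Qed.

Lemma ge0_iintZl n (c : R) (h : n.-tuple R -> \bar R) : (0 <= c)%R ->
  measurable_fun setT h -> (forall y, 0 <= h y) ->
  iint (fun y => c%:E * h y) = c%:E * iint h.
Proof.
move=> c_ge0; elim: n h => [|n IH] h mh h_ge0 //=.
rewrite -ge0_integralZl_EFin //; last 2 first.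
- by move=> x _; apply: iint_ge0.
- exact: measurable_iint_cons.
by apply: eq_integral => x _; apply: IH => //; exact: measurable_cons_section.
Qed.

End iterated_integral.

Section weighted_integral.
Variables (R : realType) (n : nat) (p : R).
Local Open Scope ereal_scope.

Definition wpow_iint (w u : n.-tuple R -> R) : \bar R :=
  iint (fun y => (w y * `|u y| `^ p)%:E).

Lemma measurable_wpow (w u : n.-tuple R -> R) :
  measurable_fun setT w -> measurable_fun setT u ->
  measurable_fun setT (fun y => (w y * `|u y| `^ p)%:E).
Proof.
move=> mw mu; apply/measurable_EFinP; apply: measurable_funM => //.
apply: measurableT_comp (measurable_powR p) _.
exact: measurableT_comp (@normr_measurable R setT) mu.
Qed.

Variable w : n.-tuple R -> R.
Hypotheses (w_ge0 : forall y, (0 <= w y)%R) (mw : measurable_fun setT w).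

Lemma wpow_ge0 (u : n.-tuple R -> R) y : 0 <= (w y * `|u y| `^ p)%:E.
Proof. by rewrite lee_fin mulr_ge0 ?powR_ge0. Qed.

Lemma wpow_iint_ge0 (u : n.-tuple R -> R) : 0 <= wpow_iint w u.
Proof. by apply: iint_ge0 => y; exact: wpow_ge0. Qed.

Lemma le_wpow_iint_weight (w' u : n.-tuple R -> R) :
  (forall y, w y <= w' y)%R -> measurable_fun setT w' -> measurable_fun setT u ->
  wpow_iint w u <= wpow_iint w' u.
Proof.
move=> ww' mw' mu.
apply: ge0_le_iint; [exact: measurable_wpow|exact: measurable_wpow|exact: wpow_ge0|].
by move=> y; rewrite lee_fin ler_wpM2r ?powR_ge0.
Qed.

Lemma wpow_iint_le_split (u v : n.-tuple R -> R) : (0 <= p)%R ->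
  measurable_fun setT u -> measurable_fun setT v ->
  wpow_iint w u <= (2 `^ p)%:E * (wpow_iint w (u \- v)%R + wpow_iint w v).
Proof.
move=> p_ge0 mu mv; have muv : measurable_fun setT (u \- v)%R by exact: measurable_funB.
rewrite /wpow_iint -ge0_iintD; last 4 first.
- exact: measurable_wpow.
- exact: measurable_wpow.
- exact: wpow_ge0.
- exact: wpow_ge0.
rewrite -ge0_iintZl ?powR_ge0 //; last 2 first.
- by apply: emeasurable_funD; exact: measurable_wpow.
- by move=> y; rewrite adde_ge0 ?wpow_ge0.
apply: ge0_le_iint; [exact: measurable_wpow| |exact: wpow_ge0|].
  apply: emeasurable_funM; first exact: measurable_cst.
  by apply: emeasurable_funD; exact: measurable_wpow.
move=> y; rewrite -EFinD -EFinM lee_fin -mulrDr mulrCA.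
by rewrite ler_wpM2l // powR_norm_le_split.
Qed.

End weighted_integral.

Lemma measurable_eball (R : realType) n (x : n.-tuple R) r : measurable (eball x r).
Proof.
pose dist2 (y : n.-tuple R) := \sum_(i < n) (tnth y i - tnth x i) ^+ 2.
have mdist2 : measurable_fun setT dist2.
  apply: measurable_sum => i; apply: measurable_funX.
  by apply: measurable_funB; [exact: measurable_tnth|exact: measurable_cst].
have := mdist2 measurableT _ (measurable_itv `]-oo, r ^+ 2[).
by rewrite setTI; congr measurable; apply/seteqP; split => y /=; rewrite in_itv.
Qed.

Section morrey_local_bounds.
Variables (R : realType) (n : nat) (p lam : R).
Hypothesis p_gt0 : 0 < p.
Local Open Scope ereal_scope.

Lemma morreyM_ge0 (u : n.-tuple R -> R) x r : 0 <= morreyM p lam u x r.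
Proof.
by rewrite mule_ge0 ?lee_fin ?powR_ge0 // wpow_iint_ge0 // => y; rewrite indicE.
Qed.

Lemma morreyM_lt_norm (u : n.-tuple R -> R) (e : R) x r : (0 < r)%R ->
  morrey_norm p lam u < e%:E -> morreyM p lam u x r < (e `^ p)%:E.
Proof.
move=> r_gt0 u_lt.
have M_ge0 := morreyM_ge0 u x r.
have M_le : morreyM p lam u x r `^ p^-1 <= morrey_norm p lam u.
  by apply: ereal_sup_ubound; exists x => //; exists r.
have e_gt0 : (0 < e)%R.
  by rewrite -lte_fin; apply: le_lt_trans u_lt; apply: le_trans M_le; exact: poweR_ge0.
rewrite ltNge; apply/negP => e_le.
have : ((e `^ p)%:E) `^ p^-1 <= morreyM p lam u x r `^ p^-1.
  apply: gt0_ler_poweR => //; first by rewrite invr_ge0 ltW.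
    by rewrite in_itv /= leey andbT lee_fin powR_ge0.
  by rewrite in_itv /= leey andbT.
rewrite poweR_EFin -powRrM mulfV ?gt_eqF // powRr1 ?(ltW e_gt0) // => e_leM.
by have := le_lt_trans (le_trans e_leM M_le) u_lt; rewrite ltxx.
Qed.

(* The weight w lies below the indicator of B(x, r), so the [f - g] term is
   controlled by M(f - g; x, r) <= ||f - g||^p. *)
Lemma wpow_iint_ball_le_split (w f g : n.-tuple R -> R) (e : R) x r :
  (0 < r)%R -> (forall y, 0 <= w y <= \1_(eball x r) y)%R -> measurable_fun setT w ->
  measurable_fun setT f -> measurable_fun setT g -> morrey_norm p lam (f \- g)%R < e%:E ->
  (r `^ (- lam))%:E * wpow_iint p w f <=
  (2 `^ p)%:E * ((e `^ p)%:E + (r `^ (- lam))%:E * wpow_iint p w g).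
Proof.
move=> r_gt0 w_ball mw mf mg fg_lt.
have w_ge0 y : (0 <= w y)%R by have /andP[] := w_ball y.
have rl_ge0 : 0 <= (r `^ (- lam))%:E by rewrite lee_fin powR_ge0.
have mfg : measurable_fun setT (f \- g)%R by exact: measurable_funB.
have fg_ball : (r `^ (- lam))%:E * wpow_iint p w (f \- g)%R <= (e `^ p)%:E.
  apply: le_trans (ltW (morreyM_lt_norm x r_gt0 fg_lt)); apply: lee_wpmul2l => //.
  apply: le_wpow_iint_weight => // [y|]; first by have /andP[] := w_ball y.
  by apply: measurable_indic; exact: measurable_eball.
apply: le_trans (lee_wpmul2l rl_ge0 (wpow_iint_le_split w_ge0 mw (ltW p_gt0) mf mg)) _.
rewrite muleCA ge0_muleDr ?wpow_iint_ge0 //.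
by rewrite lee_wpmul2l ?lee_fin ?powR_ge0 // leeD2r.
Qed.

Lemma morreyM_le_split (f g : n.-tuple R -> R) (e : R) x r : (0 < r)%R ->
  measurable_fun setT f -> measurable_fun setT g -> morrey_norm p lam (f \- g)%R < e%:E ->
  morreyM p lam f x r <= (2 `^ p)%:E * ((e `^ p)%:E + morreyM p lam g x r).
Proof.
move=> r_gt0; apply: (wpow_iint_ball_le_split (x := x)) => //.
- by move=> y; rewrite lexx andbT indicE; case: (_ \in _).
- by apply: measurable_indic; exact: measurable_eball.
Qed.

Lemma iint_on_ball1_le_split (C : set (n.-tuple R)) (f g : n.-tuple R -> R) (e : R) x :
  measurable C -> measurable_fun setT f -> measurable_fun setT g ->
  morrey_norm p lam (f \- g)%R < e%:E ->
  iint_on (eball x 1) (fun y => (`|f y| `^ p * \1_C y)%:E) <=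
  (2 `^ p)%:E * ((e `^ p)%:E + iint_on (eball x 1) (fun y => (`|g y| `^ p * \1_C y)%:E)).
Proof.
move=> mC mf mg fg_lt.
pose w y : R := (\1_(eball x 1) y * \1_C y)%R.
have iint_onE u : iint_on (eball x 1) (fun y => (`|u y| `^ p * \1_C y)%:E) = wpow_iint p w u.
  by congr iint; apply: funext => y; rewrite -EFinM mulrA mulrAC.
have w_ball y : (0 <= w y <= \1_(eball x 1) y)%R.
  by rewrite /w !indicE; do 2 case: (_ \in _); rewrite ?mulr1 ?mulr0 ?ler0n ?lexx.
have mw : measurable_fun setT w.
  by apply: measurable_funM; apply: measurable_indic => //; exact: measurable_eball.
have := wpow_iint_ball_le_split ltr01 w_ball mw mf mg fg_lt.
by rewrite !iint_onE powR1 !mul1e.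
Qed.

End morrey_local_bounds.

Section ereal_vanishing.
Variables (R : realType) (I : Type) (F : set_system I) (FF : Filter F).
Local Open Scope ereal_scope.

Lemma ge0_cvge0 (h : I -> \bar R) : (forall i, 0 <= h i) ->
  (forall e, (0 < e)%R -> \forall i \near F, h i <= e%:E) -> h i @[i --> F] --> 0.
Proof.
move=> h_ge0 h_le; have h_fin (e : R) : (0 < e)%R -> \forall i \near F, h i \is a fin_num.
  move=> e_gt0; move: (h_le e e_gt0); apply: filterS => i hi.
  by rewrite ge0_fin_numE ?(le_lt_trans hi (ltry _)).
apply/fine_cvgP; split; first exact: h_fin ltr01.
apply/cvgrPdist_le => e e_gt0; move: (h_fin e e_gt0) (h_le e e_gt0).
apply: filterS2 => i hi hie.
by rewrite sub0r normrN /= ger0_norm ?fine_ge0 // -lee_fin fineK.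
Qed.

Lemma ereal_sup_cvg0_approx (X : pointedType) (c : R) (h : I -> X -> \bar R) :
  (0 < c)%R -> (forall i x, 0 <= h i x) ->
  (forall d, (0 < d)%R -> exists2 k : I -> X -> \bar R,
     ereal_sup [set k i x | x in setT] @[i --> F] --> 0 &
     \forall i \near F, forall x, h i x <= c%:E * (d%:E + k i x)) ->
  ereal_sup [set h i x | x in setT] @[i --> F] --> 0.
Proof.
move=> c_gt0 h_ge0 h_approx; apply: ge0_cvge0.
  move=> i; apply: le_trans (h_ge0 i point) _.
  by apply: ereal_sup_ubound; exists point.
move=> e e_gt0; pose d := (e / (c * 2))%R.
have d_gt0 : (0 < d)%R by rewrite divr_gt0 // mulr_gt0.
have [k k_cvg h_le] := h_approx d d_gt0.
have k_lt : \forall i \near F, ereal_sup [set k i x | x in setT] < d%:E.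
  by apply: (k_cvg [set y | y < d%:E]); apply: open_ereal_lt'; rewrite lte_fin.
move: k_lt h_le; apply: filterS2 => i k_lt h_le.
apply: ge_ereal_sup => _ [x _ <-]; apply: le_trans (h_le x) _.
have k_le : k i x <= d%:E.
  by apply: ltW; apply: le_lt_trans k_lt; apply: ereal_sup_ubound; exists x.
apply: le_trans (lee_wpmul2l _ (leeD2l _ k_le)) _; first by rewrite lee_fin ltW.
rewrite -EFinD -EFinM lee_fin /d le_eqVlt; apply/orP; left; apply/eqP.
by field; rewrite gt_eqF.
Qed.

End ereal_vanishing.

Lemma morrey_closedI (R : realType) n (p lam : R) (V W : set (n.-tuple R -> R)) :
  morrey_closed p lam V -> morrey_closed p lam W -> morrey_closed p lam (V `&` W).
Proof.
move=> V_closed W_closed f f_morrey f_approx.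
by split; [apply: V_closed|apply: W_closed] => // e e_gt0;
  have [g [Vg Wg] fg_lt] := f_approx e e_gt0; exists g.
Qed.

Section vanishing_sup.
Variables (R : realType) (n : nat) (p lam : R) (I : Type) (F : set_system I).
Variable Q : (n.-tuple R -> R) -> I -> n.-tuple R -> \bar R.
Local Open Scope ereal_scope.

Definition vanishing_sup : set (n.-tuple R -> R) :=
  [set f | morrey p lam f /\ ereal_sup [set Q f i x | x in setT] @[i --> F] --> 0].

Lemma morrey_closed_vanishing_sup :
  Filter F -> (0 < p)%R -> (forall u i x, 0 <= Q u i x) ->
  (forall f g (e : R), morrey p lam f -> morrey p lam g ->
     morrey_norm p lam (f \- g)%R < e%:E ->
     \forall i \near F, forall x, Q f i x <= (2 `^ p)%:E * ((e `^ p)%:E + Q g i x)) ->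
  morrey_closed p lam vanishing_sup.
Proof.
move=> FF p_gt0 Q_ge0 Q_split f f_morrey f_approx; split => //.
apply: (ereal_sup_cvg0_approx FF (c := 2 `^ p)) => // d d_gt0.
have [g [g_morrey g_cvg] fg_lt] := f_approx _ (powR_gt0 (p^-1) d_gt0).
exists (Q g) => //; have := Q_split _ _ _ f_morrey g_morrey fg_lt.
by rewrite -powRrM mulVf ?gt_eqF // powRr1 ?ltW.
Qed.

End vanishing_sup.

Section morrey_vanishing_classes.
Variables (R : realType) (n : nat) (p lam : R).
Hypothesis p_gt0 : 0 < p.
Local Open Scope ereal_scope.

Lemma morrey_closed_V0 : morrey_closed p lam (@V0 R n p lam).
Proof.
apply: (morrey_closed_vanishing_sup (F := 0^'+)
  (Q := fun u r x => morreyM p lam u x r)) => //.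
  by move=> *; exact: morreyM_ge0.
move=> f g e [mf _] [mg _] fg_lt; move: (@nbhs_right_gt R 0); apply: filterS => r r_gt0 x.
exact: morreyM_le_split.
Qed.

Lemma morrey_closed_Vinfty : morrey_closed p lam (@Vinfty R n p lam).
Proof.
apply: (morrey_closed_vanishing_sup (F := +oo%R)
  (Q := fun u r x => morreyM p lam u x r)) => //.
  by move=> *; exact: morreyM_ge0.
move=> f g e [mf _] [mg _] fg_lt; move: (@nbhs_pinfty_gt R 0 (num_real 0)).
by apply: filterS => r r_gt0 x; exact: morreyM_le_split.
Qed.

Lemma morrey_closed_Vstar : morrey_closed p lam (@Vstar R n p lam).
Proof.
apply: (morrey_closed_vanishing_sup (F := \oo) (Q := fun u N x => iint_on (eball x 1)
  (fun y => (`|u y| `^ p * \1_(~` eball [tuple of nseq n 0] N%:R) y)%:E))) => //.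
  move=> u N x; apply: iint_ge0 => y.
  by rewrite mule_ge0 // lee_fin ?mulr_ge0 ?powR_ge0 // indicE; case: (_ \in _).
move=> f g e [mf _] [mg _] fg_lt; apply: nearW => N x.
apply: (iint_on_ball1_le_split (lam := lam)) => //.
by apply: measurableC; exact: measurable_eball.
Qed.

End morrey_vanishing_classes.

Theorem lemma3p7 (R : realType) (n : nat) (lam p : R) :
  0 <= lam -> lam < n%:R -> 1 <= p ->
  [/\ @morrey_closed R n p lam (@V0 R n p lam),
      @morrey_closed R n p lam (@Vinfty R n p lam),
      @morrey_closed R n p lam (@Vstar R n p lam)
    & @morrey_closed R n p lam (@V0inftystar R n p lam)].
Proof.
move=> _ _ p_ge1; have p_gt0 : 0 < p by apply: lt_le_trans p_ge1.
have V0_closed := @morrey_closed_V0 R n p lam p_gt0.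
have Vinfty_closed := @morrey_closed_Vinfty R n p lam p_gt0.
have Vstar_closed := @morrey_closed_Vstar R n p lam p_gt0.
by split => //; do 2 apply: morrey_closedI => //.
Qed.
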